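(* Suppose $\mathit{Act}$ is infinite. Then $\mathcal{E}_v'$ is complete for $\simeq_\omega$ over open monitors: for all monitors $m,n$, if $m\simeq_\omega n$ then $\mathcal{E}_v'\vdash m=n$.
   Context: Monitors: terms $m,n ::= v \mid a.m \mid m+n \mid x$ over an action set $\mathit{Act}$ and variables $x$, verdicts $v::=\mathit{end}\mid\mathit{yes}\mid\mathit{no}$; closed monitors contain no variables. Transitions $\xrightarrow{\alpha}$, $\alpha\in\mathit{Act}\cup\{\tau\}$ ($\tau\notin\mathit{Act}$): least relation with $a.m\xrightarrow{a}m$; $m\xrightarrow{\alpha}m'$ implies $m+n\xrightarrow{\alpha}m'$ and $n+m\xrightarrow{\alpha}m'$; $v\xrightarrow{\alpha}v$ for each verdict $v$. Weak transitions: $m\xRightarrow{\varepsilon}m'$ iff $m(\xrightarrow{\tau})^*m'$; $m\xRightarrow{a}m'$ iff $m\xRightarrow{\varepsilon}\xrightarrow{a}\xRightarrow{\varepsilon}m'$; $m\xRightarrow{as'}m'$ ($s'\neq\varepsilon$) iff $m\xRightarrow{a}m_1\xRightarrow{s'}m'$. For closed $m$: $L_a(m)=\{s\mid m\xRightarrow{s}\mathit{yes}\}$, $L_r(m)=\{s\mid m\xRightarrow{s}\mathit{no}\}$; closed $m\simeq_\omega n$ iff $L_a(m)\cdot\mathit{Act}^\omega=L_a(n)\cdot\mathit{Act}^\omega$ and $L_r(m)\cdot\mathit{Act}^\omega=L_r(n)\cdot\mathit{Act}^\omega$; for open monitors $m\simeq_\omega n$ iff $\sigma(m)\simeq_\omega\sigma(n)$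 for all closed substitutions $\sigma$. $\mathcal{E}\vdash m=n$ denotes derivability by the rules of equational logic. $\mathcal{E}_v'$ consists of (A1) $x+y=y+x$; (A2) $x+(y+z)=(x+y)+z$; (A3) $x+x=x$; (A4) $x+\mathit{end}=x$; for each $a\in\mathit{Act}$: ($E_a$) $a.\mathit{end}=\mathit{end}$; ($Y_a$) $\mathit{yes}=\mathit{yes}+a.\mathit{yes}$; ($N_a$) $\mathit{no}=\mathit{no}+a.\mathit{no}$; ($D_a$) $a.(x+y)=a.x+a.y$; and (O1) $\mathit{yes}+\mathit{no}=\mathit{yes}+\mathit{no}+x$. *)

From Stdlib Require Import List Relations Arith.
Import ListNotations.

Set Implicit Arguments.

Inductive verdict : Type := vend | vyes | vno.

Inductive mon (A : Type) : Type :=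
| Verd : verdict -> mon A
| Pre  : A -> mon A -> mon A
| Sum  : mon A -> mon A -> mon A
| Var  : nat -> mon A.
Arguments Verd {A} _.
Arguments Var {A} _.

Section Monitors.
Variable A : Type.

(* labels: Some a = action a, None = tau *)
Inductive step : mon A -> option A -> mon A -> Prop :=
| st_pre  : forall a m, step (Pre a m) (Some a) m
| st_suml : forall m n al m', step m al m' -> step (Sum m n) al m'
| st_sumr : forall m n al m', step m al m' -> step (Sum n m) al m'
| st_verd : forall v al, step (Verd v) al (Verd v).

Definition tau_star : mon A -> mon A -> Prop :=
  clos_refl_trans (mon A) (fun m m' => step m None m').

Definition wstep (m : mon A) (a : A) (m' : mon A) : Prop :=
  exists m1 m2, tau_star m m1 /\ step m1 (Some a) m2 /\ tau_star m2 m'.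

Fixpoint wtrace (m : mon A) (s : list A) (m' : mon A) : Prop :=
  match s with
  | [] => tau_star m m'
  | [a] => wstep m a m'
  | a :: s' => exists m1, wstep m a m1 /\ wtrace m1 s' m'
  end.

Fixpoint closed (m : mon A) : Prop :=
  match m with
  | Verd _ => True
  | Pre _ m => closed m
  | Sum m n => closed m /\ closed n
  | Var _ => False
  end.

Definition La (m : mon A) : list A -> Prop := fun s => wtrace m s (Verd vyes).
Definition Lr (m : mon A) : list A -> Prop := fun s => wtrace m s (Verd vno).

Definition omega_word := nat -> A.

Definition is_prefix (s : list A) (w : omega_word) : Prop :=
  forall i, i < length s -> nth_error s i = Some (w i).

Definition ext (L : list A -> Prop) (w : omega_word) : Prop :=
  exists s, L s /\ is_prefix s w.

Definition omega_eq_closed (m n : mon A) : Prop :=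
  (forall w, ext (La m) w <-> ext (La n) w) /\
  (forall w, ext (Lr m) w <-> ext (Lr n) w).

Fixpoint subst (sigma : nat -> mon A) (m : mon A) : mon A :=
  match m with
  | Verd v => Verd v
  | Pre a m => Pre a (subst sigma m)
  | Sum m n => Sum (subst sigma m) (subst sigma n)
  | Var x => sigma x
  end.

Definition omega_eq (m n : mon A) : Prop :=
  forall sigma : nat -> mon A, (forall x, closed (sigma x)) ->
    omega_eq_closed (subst sigma m) (subst sigma n).

(* The axiom system E_v' ; x, y, z are Var 0, Var 1, Var 2 *)
Inductive Ev' : mon A -> mon A -> Prop :=
| A1 : Ev' (Sum (Var 0) (Var 1)) (Sum (Var 1) (Var 0))
| A2 : Ev' (Sum (Var 0) (Sum (Var 1) (Var 2))) (Sum (Sum (Var 0) (Var 1)) (Var 2))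
| A3 : Ev' (Sum (Var 0) (Var 0)) (Var 0)
| A4 : Ev' (Sum (Var 0) (Verd vend)) (Var 0)
| Ea : forall a, Ev' (Pre a (Verd vend)) (Verd vend)
| Ya : forall a, Ev' (Verd vyes) (Sum (Verd vyes) (Pre a (Verd vyes)))
| Na : forall a, Ev' (Verd vno) (Sum (Verd vno) (Pre a (Verd vno)))
| Da : forall a, Ev' (Pre a (Sum (Var 0) (Var 1))) (Sum (Pre a (Var 0)) (Pre a (Var 1)))
| O1 : Ev' (Sum (Verd vyes) (Verd vno)) (Sum (Sum (Verd vyes) (Verd vno)) (Var 0)).

Inductive derivable (E : mon A -> mon A -> Prop) : mon A -> mon A -> Prop :=
| d_ax    : forall l r (sigma : nat -> mon A), E l r ->
              derivable E (subst sigma l) (subst sigma r)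
| d_refl  : forall m, derivable E m m
| d_sym   : forall m n, derivable E m n -> derivable E n m
| d_trans : forall m n p, derivable E m n -> derivable E n p -> derivable E m p
| d_pre   : forall a m n, derivable E m n -> derivable E (Pre a m) (Pre a n)
| d_sum   : forall m m' n n', derivable E m m' -> derivable E n n' ->
              derivable E (Sum m n) (Sum m' n').

End Monitors.

From Stdlib Require Import List Relations Arith Lia Classical.
Import ListNotations.
Set Implicit Arguments.

(* Syntactic side: every monitor is provably a finite sum of "paths" a1.…ak.e
   whose leaf e is yes, no or a variable (axioms A1-A4, E_a, D_a).  Writing
   P <= X for E_v' |- X + P = X, to prove m = n it suffices to show that every
   path of n is below the normal form of m, and symmetrically.

   Semantic side: a weak trace to a verdict is the same as an "acceptance"
   by a syntactic path, and acceptance of sigma(m) factors through the paths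
   of m.  Using a fresh action (Act is infinite) we probe m with suitable
   closed substitutions: a path s.yes (s.no) of n forces a path t.yes (t.no)
   of m with t a prefix of s, which absorbs s.yes by Y_a (N_a); a path s.x of
   n forces either the same path s.x in m, or both t.yes and t'.no paths of m
   below s, and then s.x is absorbed thanks to O1. *)

Section Completeness.
Variable A : Type.
Notation M := (mon A).
Notation D := (derivable (@Ev' A)).

Definition subst3 (X Y Z : M) : nat -> M :=
  fun k => match k with 0 => X | 1 => Y | _ => Z end.

Lemma E_comm (X Y : M) : D (Sum X Y) (Sum Y X).
Proof. exact (@d_ax A _ _ _ (subst3 X Y X) (A1 A)). Qed.

Lemma E_assoc (X Y Z : M) : D (Sum X (Sum Y Z)) (Sum (Sum X Y) Z).
Proof. exact (@d_ax A _ _ _ (subst3 X Y Z) (A2 A)). Qed.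

Lemma E_idem (X : M) : D (Sum X X) X.
Proof. exact (@d_ax A _ _ _ (subst3 X X X) (A3 A)). Qed.

Lemma E_end_r (X : M) : D (Sum X (Verd vend)) X.
Proof. exact (@d_ax A _ _ _ (subst3 X X X) (A4 A)). Qed.

Lemma E_end_l (X : M) : D (Sum (Verd vend) X) X.
Proof. eapply d_trans; [apply E_comm | apply E_end_r]. Qed.

Lemma E_pre_end a : D (Pre a (Verd vend)) (Verd vend).
Proof. exact (@d_ax A _ _ _ (subst3 (Verd vend) (Verd vend) (Verd vend)) (Ea a)). Qed.

Lemma E_verdict_loop v a : v <> vend -> D (Verd v) (Sum (Verd v) (Pre a (Verd v))).
Proof.
  intro Hv. set (s := subst3 (Verd vend) (Verd vend) (Verd vend)).
  destruct v; [congruence | exact (@d_ax A _ _ _ s (Ya a)) | exact (@d_ax A _ _ _ s (Na a))].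
Qed.

Lemma E_distr a (X Y : M) : D (Pre a (Sum X Y)) (Sum (Pre a X) (Pre a Y)).
Proof. exact (@d_ax A _ _ _ (subst3 X Y X) (Da a)). Qed.

Lemma E_inconsistent (X : M) :
  D (Sum (Verd vyes) (Verd vno)) (Sum (Sum (Verd vyes) (Verd vno)) X).
Proof. exact (@d_ax A _ _ _ (subst3 X X X) (O1 A)). Qed.

Definition pre_s (s : list A) (X : M) : M := fold_right (@Pre A) X s.
Definition path_mon (p : list A * M) : M := pre_s (fst p) (snd p).
Definition nf (L : list (list A * M)) : M :=
  fold_right (fun p acc => Sum (path_mon p) acc) (Verd vend) L.

Fixpoint paths (m : M) : list (list A * M) :=
  match m with
  | Verd vend => []
  | Verd v => [([], Verd v)]
  | Var x => [([], Var x)]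
  | Pre a m => map (fun p => (a :: fst p, snd p)) (paths m)
  | Sum m n => paths m ++ paths n
  end.

Lemma nf_app L1 L2 : D (nf (L1 ++ L2)) (Sum (nf L1) (nf L2)).
Proof.
  induction L1 as [|p L1 IH]; simpl.
  - apply d_sym, E_end_l.
  - eapply d_trans; [apply d_sum; [apply d_refl | exact IH] | apply E_assoc].
Qed.

Lemma nf_pre a L : D (nf (map (fun p => (a :: fst p, snd p)) L)) (Pre a (nf L)).
Proof.
  induction L as [|p L IH]; simpl.
  - apply d_sym, E_pre_end.
  - eapply d_trans; [apply d_sum; [apply d_refl | exact IH] | apply d_sym, E_distr].
Qed.

Lemma nf_paths m : D m (nf (paths m)).
Proof.
  induction m as [v|a m IH|m IHm n IHn|x]; simpl.
  - destruct v; simpl; [apply d_refl | apply d_sym, E_end_r | apply d_sym, E_end_r].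
  - eapply d_trans; [apply d_pre, IH | apply d_sym, nf_pre].
  - eapply d_trans; [apply d_sum; eassumption | apply d_sym, nf_app].
  - apply d_sym, E_end_r.
Qed.

(* [absorbs X P] : P is provably below X in the join-semilattice order. *)
Definition absorbs (X P : M) : Prop := D (Sum X P) X.

Lemma absorbs_of_eq (X P : M) : D X P -> absorbs X P.
Proof.
  intro H. unfold absorbs.
  eapply d_trans; [apply d_sum; [apply d_refl | apply d_sym, H] | apply E_idem].
Qed.

Lemma absorbs_trans X Q P : absorbs X Q -> absorbs Q P -> absorbs X P.
Proof.
  unfold absorbs; intros HXQ HQP.
  eapply d_trans; [apply d_sum; [apply d_sym, HXQ | apply d_refl] |].
  eapply d_trans; [apply d_sym, E_assoc |].
  eapply d_trans; [apply d_sum; [apply d_refl | apply HQP] | exact HXQ].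
Qed.

Lemma absorbs_sum X P Q : absorbs X P -> absorbs X Q -> absorbs X (Sum P Q).
Proof.
  unfold absorbs; intros HP HQ.
  eapply d_trans; [apply E_assoc |].
  eapply d_trans; [apply d_sum; [apply HP | apply d_refl] | exact HQ].
Qed.

Lemma absorbs_in p L : In p L -> absorbs (nf L) (path_mon p).
Proof.
  unfold absorbs. induction L as [|q L IH]; simpl; intros Hin; [destruct Hin|].
  destruct Hin as [->|Hin].
  - eapply d_trans; [apply d_sym, E_assoc |].
    eapply d_trans; [apply d_sum; [apply d_refl | apply E_comm] |].
    eapply d_trans; [apply E_assoc | apply d_sum; [apply E_idem | apply d_refl]].
  - eapply d_trans; [apply d_sym, E_assoc | apply d_sum; [apply d_refl | apply IH, Hin]].
Qed.

Lemma absorbs_nf X L : (forall p, In p L -> absorbs X (path_mon p)) -> absorbs X (nf L).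
Proof.
  induction L as [|q L IH]; simpl; intros H.
  - apply E_end_r.
  - apply absorbs_sum; [apply H | apply IH]; auto.
Qed.

Lemma absorbs_antisym X Y : absorbs X Y -> absorbs Y X -> D X Y.
Proof.
  intros HXY HYX. eapply d_trans; [apply d_sym, HXY |].
  eapply d_trans; [apply E_comm | exact HYX].
Qed.

Lemma pre_s_sum s (X Y : M) : D (pre_s s (Sum X Y)) (Sum (pre_s s X) (pre_s s Y)).
Proof.
  induction s as [|a s IH]; simpl; [apply d_refl |].
  eapply d_trans; [apply d_pre, IH | apply E_distr].
Qed.

Lemma absorbs_pre_s s X Y : absorbs X Y -> absorbs (pre_s s X) (pre_s s Y).
Proof.
  unfold absorbs; intro H. eapply d_trans; [apply d_sym, pre_s_sum |].
  induction s as [|a s IH]; simpl; [exact H | apply d_pre, IH].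
Qed.

Lemma absorbs_verdict v u : v <> vend -> absorbs (Verd v) (pre_s u (Verd v)).
Proof.
  intro Hv. unfold absorbs.
  induction u as [|a u IH]; simpl; [apply E_idem |].
  apply d_sym. eapply d_trans; [apply (E_verdict_loop a Hv) |].
  eapply d_trans; [apply d_sum; [apply d_refl | apply d_pre, d_sym, IH] |].
  eapply d_trans; [apply d_sum; [apply d_refl | apply E_distr] |].
  eapply d_trans; [apply E_assoc | apply d_sum; [apply d_sym, E_verdict_loop, Hv | apply d_refl]].
Qed.

Lemma absorbs_inconsistent s (X : M) :
  absorbs (Sum (pre_s s (Verd vyes)) (pre_s s (Verd vno))) (pre_s s X).
Proof.
  apply absorbs_trans with (Q := pre_s s (Sum (Verd vyes) (Verd vno))).
  - apply absorbs_of_eq, d_sym, pre_s_sum.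
  - apply absorbs_pre_s. apply d_sym, E_inconsistent.
Qed.

(* [accepts m s v]: reading s along a syntactic branch of m reaches verdict v
   (which then absorbs the rest of s). *)
Inductive accepts : M -> list A -> verdict -> Prop :=
| acc_verd : forall v s, accepts (Verd v) s v
| acc_pre : forall a m s v, accepts m s v -> accepts (Pre a m) (a :: s) v
| acc_suml : forall m n s v, accepts m s v -> accepts (Sum m n) s v
| acc_sumr : forall m n s v, accepts n s v -> accepts (Sum m n) s v.

Lemma wtrace_cons (m m' : M) a s :
  wtrace m (a :: s) m' <-> exists m1, wstep m a m1 /\ wtrace m1 s m'.
Proof.
  destruct s as [|b s]; [| simpl; tauto]. simpl. split.
  - intro H. exists m'. split; [exact H | apply rt_refl].
  - intros (m1 & (x & y & H1 & H2 & H3) & H4). exists x, y.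
    repeat split; [exact H1 | exact H2 | eapply rt_trans; eassumption].
Qed.

Definition ocons (al : option A) (s : list A) : list A :=
  match al with None => s | Some a => a :: s end.

Lemma step_accepts (m m' : M) al :
  step m al m' -> forall s v, accepts m' s v -> accepts m (ocons al s) v.
Proof.
  induction 1; intros s w Hacc; simpl.
  - constructor; auto.
  - apply acc_suml; auto.
  - apply acc_sumr; auto.
  - inversion Hacc; subst. constructor.
Qed.

Lemma tau_star_accepts (m m' : M) :
  tau_star m m' -> forall s v, accepts m' s v -> accepts m s v.
Proof. induction 1; intros; eauto. apply (step_accepts H H0). Qed.

Lemma wtrace_accepts s : forall (m m' : M), wtrace m s m' ->
  forall r v, accepts m' r v -> accepts m (s ++ r) v.
Proof.
  induction s as [|a s IH]; intros m m' H r v Hacc.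
  - eapply tau_star_accepts; eauto.
  - apply wtrace_cons in H. destruct H as (m1 & (x & y & H1 & H2 & H3) & H4).
    eapply tau_star_accepts; [exact H1 |].
    change (accepts x (ocons (Some a) (s ++ r)) v). apply (step_accepts H2).
    eapply tau_star_accepts; [exact H3 | eapply IH; eauto].
Qed.

Lemma wtrace_verdict v s : wtrace (Verd v : M) s (Verd v).
Proof.
  induction s as [|a s IH]; [apply rt_refl |].
  apply wtrace_cons. exists (Verd v). split; [| exact IH].
  exists (Verd v), (Verd v). repeat split; [apply rt_refl | constructor | apply rt_refl].
Qed.

Section Context.
(* A one-hole context C (here: summing on either side) that lifts every step. *)
Variable C : M -> M.
Hypothesis C_step : forall al z z', step z al z' -> step (C z) al z'.

Lemma tau_step_ctx (m x y : M) al : tau_star m x -> step x al y ->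
  exists z, tau_star (C m) z /\ step z al y.
Proof.
  intros H1 H2. apply clos_rt_rt1n in H1. destruct H1 as [|y0 z H H'].
  - exists (C m). split; [apply rt_refl | apply C_step, H2].
  - exists z. split; [| exact H2].
    eapply rt_trans; [apply rt_step, C_step, H | apply clos_rt1n_rt, H'].
Qed.

Lemma wtrace_ctx (m : M) s v : wtrace m s (Verd v) -> wtrace (C m) s (Verd v).
Proof.
  destruct s as [|a s]; intro H.
  - destruct (@tau_step_ctx _ _ _ None H (st_verd v None)) as (z & Hz1 & Hz2).
    eapply rt_trans; [exact Hz1 | apply rt_step, Hz2].
  - apply wtrace_cons in H. destruct H as (m1 & (x & y & H1 & H2 & H3) & H4).
    apply wtrace_cons. exists m1. split; [| exact H4].
    destruct (tau_step_ctx H1 H2) as (z & Hz1 & Hz2). exists z, y. auto.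
Qed.
End Context.

Lemma accepts_wtrace (m : M) s v : accepts m s v -> wtrace m s (Verd v).
Proof.
  induction 1.
  - apply wtrace_verdict.
  - apply wtrace_cons. exists m. split; [| exact IHaccepts].
    exists (Pre a m), m. repeat split; [apply rt_refl | constructor | apply rt_refl].
  - apply (wtrace_ctx (fun z => Sum z n)); [intros; apply st_suml; auto | exact IHaccepts].
  - apply (wtrace_ctx (fun z => Sum m z)); [intros; apply st_sumr; auto | exact IHaccepts].
Qed.

Lemma wtrace_iff_accepts (m : M) s v : wtrace m s (Verd v) <-> accepts m s v.
Proof.
  split; [| apply accepts_wtrace].
  intro H. rewrite <- (app_nil_r s). eapply wtrace_accepts; [exact H | constructor].
Qed.

Lemma accepts_subst_paths (sigma : nat -> M) v : v <> vend -> forall m p,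
  accepts (subst sigma m) p v <->
  exists s e r, In (s, e) (paths m) /\ p = s ++ r /\ accepts (subst sigma e) r v.
Proof.
  intros Hv m. induction m as [w|a m IH|m IHm n IHn|x]; intro p; simpl.
  - destruct w; simpl; split.
    + intro H. inversion H; subst; congruence.
    + intros (s & e & r & [] & _).
    + intro H. exists [], (Verd vyes), p. simpl; auto.
    + intros (s & e & r & [H|[]] & -> & H3). inversion H; subst. exact H3.
    + intro H. exists [], (Verd vno), p. simpl; auto.
    + intros (s & e & r & [H|[]] & -> & H3). inversion H; subst. exact H3.
  - split.
    + intro H. inversion H; subst. apply IH in H4. destruct H4 as (t & e & r & H1 & -> & H3).
      exists (a :: t), e, r. split; [apply in_map_iff; exists (t, e); auto | auto].
    + intros (s & e & r & H1 & -> & H3). apply in_map_iff in H1.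
      destruct H1 as [[s' e'] [Heq Hin]]. simpl in Heq. inversion Heq; subst.
      constructor. apply IH. exists s', e, r. auto.
  - split.
    + intro H. inversion H; subst; [apply IHm in H4 | apply IHn in H4];
        destruct H4 as (s & e & r & H1 & H2 & H3); exists s, e, r; rewrite in_app_iff; auto.
    + intros (s & e & r & H1 & H2 & H3). apply in_app_iff in H1. destruct H1 as [H1|H1].
      * apply acc_suml, IHm. exists s, e, r; auto.
      * apply acc_sumr, IHn. exists s, e, r; auto.
  - split.
    + intro H. exists [], (Var x), p. simpl; auto.
    + intros (s & e & r & [H|[]] & -> & H3). inversion H; subst. exact H3.
Qed.

Fixpoint letters (m : M) : list A :=
  match m with Pre a m => a :: letters m | Sum m n => letters m ++ letters n | _ => [] end.

Lemma paths_letters (m : M) s e : In (s, e) (paths m) -> incl s (letters m).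
Proof.
  revert s e. induction m as [w|a m IH|m IHm n IHn|x]; simpl; intros s e H.
  - destruct w; simpl in H; [destruct H | |];
      destruct H as [H|[]]; inversion H; subst; apply incl_nil_l.
  - apply in_map_iff in H. destruct H as [[s' e'] [Heq Hin]]. inversion Heq; subst.
    apply incl_cons; [left; auto | apply incl_tl; eapply IH; eauto].
  - apply in_app_iff in H. destruct H as [H|H];
      [apply incl_appl; eapply IHm | apply incl_appr; eapply IHn]; eauto.
  - destruct H as [H|[]]. inversion H; subst. apply incl_nil_l.
Qed.

Lemma paths_leaf (m : M) s e : In (s, e) (paths m) ->
  e = Verd vyes \/ e = Verd vno \/ exists x, e = Var x.
Proof.
  revert s e. induction m as [w|a m IH|m IHm n IHn|x]; simpl; intros s e H.
  - destruct w; simpl in H; [destruct H | |]; destruct H as [H|[]]; inversion H; subst; auto.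
  - apply in_map_iff in H. destruct H as [[s' e'] [Heq Hin]]. inversion Heq; subst. eauto.
  - apply in_app_iff in H. destruct H; eauto.
  - destruct H as [H|[]]. inversion H; subst. eauto.
Qed.

Lemma ext_subst_paths (sigma : nat -> M) v m w : v <> vend ->
  ext (fun s => wtrace (subst sigma m) s (Verd v)) w <->
  exists t e r, In (t, e) (paths m) /\ accepts (subst sigma e) r v /\ is_prefix (t ++ r) w.
Proof.
  intro Hv. split.
  - intros (p & Hp & Hpre). apply wtrace_iff_accepts, (accepts_subst_paths _ Hv) in Hp.
    destruct Hp as (t & e & r & Hin & -> & Hacc). exists t, e, r. auto.
  - intros (t & e & r & Hin & Hacc & Hpre). exists (t ++ r). split; [| exact Hpre].
    apply wtrace_iff_accepts, (accepts_subst_paths _ Hv). exists t, e, r. auto.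
Qed.

Lemma omega_eq_sym (m n : M) : omega_eq m n -> omega_eq n m.
Proof.
  intros H sigma Hs. destruct (H sigma Hs) as [H1 H2].
  split; intro w; [rewrite H1 | rewrite H2]; reflexivity.
Qed.

Lemma omega_eq_verdict (m n : M) v (sigma : nat -> M) w : omega_eq m n -> v <> vend ->
  (forall x, closed (sigma x)) ->
  ext (fun s => wtrace (subst sigma n) s (Verd v)) w ->
  ext (fun s => wtrace (subst sigma m) s (Verd v)) w.
Proof.
  intros H Hv Hs. destruct (H sigma Hs) as [H1 H2].
  destruct v; [congruence | apply H1 | apply H2].
Qed.

Definition word_of (s : list A) (c : A) : omega_word A := fun i => nth i s c.

Lemma is_prefix_app (t r : list A) w : is_prefix (t ++ r) w -> is_prefix t w.
Proof.
  intros H i Hi. rewrite <- (nth_error_app1 t r Hi). apply H.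
  rewrite length_app. lia.
Qed.

Lemma is_prefix_word_of (s : list A) c : is_prefix s (word_of s c).
Proof. intros i Hi. apply nth_error_nth', Hi. Qed.

Lemma is_prefix_word_of_snoc (s : list A) c : is_prefix (s ++ [c]) (word_of s c).
Proof.
  intros i Hi. rewrite (nth_error_nth' _ c Hi). unfold word_of. f_equal.
  revert i Hi. induction s as [|a s IH]; intros [|i] Hi; simpl in *; auto.
  - destruct i; reflexivity.
  - apply IH. lia.
Qed.

Lemma prefix_word_of (t : list A) : forall s c,
  is_prefix t (word_of s c) -> ~ In c t -> exists u, s = t ++ u.
Proof.
  induction t as [|a t IH]; intros s c H Hc; [exists s; reflexivity |].
  assert (H0 := H 0 ltac:(simpl; lia)). unfold word_of in H0; simpl in H0.
  destruct s as [|a' s]; inversion H0; subst; [exfalso; apply Hc; left; auto |].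
  destruct (IH s c) as [u ->].
  - intros i Hi. apply (H (S i)). simpl. lia.
  - intro; apply Hc; right; auto.
  - exists u. reflexivity.
Qed.

Section FreshAction.
Hypothesis fresh : forall l : list A, exists c, ~ In c l.

Definition covered (m : M) (v : verdict) (s : list A) : Prop :=
  exists t u, In (t, Verd v) (paths m) /\ s = t ++ u.

Lemma covered_absorbs (m : M) v s : v <> vend -> covered m v s ->
  absorbs (nf (paths m)) (pre_s s (Verd v)).
Proof.
  intros Hv (t & u & Hin & ->). eapply absorbs_trans; [apply (absorbs_in _ _ Hin) |].
  unfold path_mon, pre_s; simpl. rewrite fold_right_app.
  apply absorbs_pre_s, absorbs_verdict, Hv.
Qed.

(* A verdict path s.v of n is covered in m: probe with all variables := end
   on the word s c c c ... for c fresh in m. *)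
Lemma verdict_path_covered (m n : M) v s : omega_eq m n -> v <> vend ->
  In (s, Verd v) (paths n) -> covered m v s.
Proof.
  intros H Hv Hin. destruct (fresh (letters m)) as [c Hc].
  set (sigma := fun _ : nat => (Verd vend : M)).
  assert (Hm : ext (fun p => wtrace (subst sigma m) p (Verd v)) (word_of s c)).
  { apply (@omega_eq_verdict m n v sigma _ H Hv); [intro; exact I |].
    apply (ext_subst_paths _ _ _ Hv). exists s, (Verd v), [].
    rewrite app_nil_r. repeat split; [exact Hin | constructor | apply is_prefix_word_of]. }
  apply (ext_subst_paths _ _ _ Hv) in Hm. destruct Hm as (t & e & r & Hin' & Hacc & Hpre).
  destruct (paths_leaf _ _ _ Hin') as [->|[->|[x ->]]]; simpl in Hacc;
    inversion Hacc; subst; try congruence;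
    (destruct (@prefix_word_of t s c) as [u Hu];
     [eapply is_prefix_app, Hpre | intro Hct; apply Hc; eapply paths_letters; eauto |];
     exists t, u; auto).
Qed.

(* A variable path s.x of n that is not v-covered in m is a path of m: probe
   with x := b.v, other variables := end, on the word s b b b ... for b fresh. *)
Lemma variable_path_kept (m n : M) v s x : omega_eq m n -> v <> vend ->
  In (s, Var x) (paths n) -> ~ covered m v s -> In (s, Var x) (paths m).
Proof.
  intros H Hv Hin Hno. destruct (fresh (letters m ++ s)) as [b Hb].
  set (sigma := fun y => if Nat.eqb y x then Pre b (Verd v) else (Verd vend : M)).
  assert (Hs : forall y, closed (sigma y)).
  { intro y. unfold sigma. destruct (Nat.eqb y x); exact I. }
  assert (Hm : ext (fun p => wtrace (subst sigma m) p (Verd v)) (word_of s b)).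
  { apply (@omega_eq_verdict m n v sigma _ H Hv Hs).
    apply (ext_subst_paths _ _ _ Hv). exists s, (Var x), [b]. repeat split; [exact Hin | |].
    - simpl. unfold sigma. rewrite Nat.eqb_refl. repeat constructor.
    - apply is_prefix_word_of_snoc. }
  apply (ext_subst_paths _ _ _ Hv) in Hm. destruct Hm as (t & e & r & Hin' & Hacc & Hpre).
  assert (Hbt : ~ In b t) by (intro; apply Hb, in_app_iff; left; eapply paths_letters; eauto).
  destruct (@prefix_word_of t s b (is_prefix_app _ _ Hpre) Hbt) as [u Hu].
  destruct (paths_leaf _ _ _ Hin') as [->|[->|[y ->]]]; simpl in Hacc.
  - inversion Hacc; subst. exfalso. apply Hno. exists t, u. auto.
  - inversion Hacc; subst. exfalso. apply Hno. exists t, u. auto.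
  - unfold sigma in Hacc. destruct (Nat.eqb y x) eqn:Hyx; inversion Hacc; subst;
      [| congruence].
    apply Nat.eqb_eq in Hyx. subst y.
    destruct u as [|a u]; [rewrite app_nil_r; exact Hin' |].
    (* the letter after t is both b (from the probe) and a (from s) *)
    exfalso. assert (Hl := Hpre (length t) ltac:(rewrite length_app; simpl; lia)).
    rewrite nth_error_app2, Nat.sub_diag in Hl by lia. simpl in Hl.
    unfold word_of in Hl. rewrite app_nth2, Nat.sub_diag in Hl by lia. simpl in Hl.
    injection Hl as <-. apply Hb, in_app_iff. right. apply in_app_iff. right. left. auto.
Qed.

Lemma path_absorbed (m n : M) : omega_eq m n ->
  forall p, In p (paths n) -> absorbs (nf (paths m)) (path_mon p).
Proof.
  intros H [s e] Hin. unfold path_mon; simpl.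
  destruct (paths_leaf _ _ _ Hin) as [->|[->|[x ->]]].
  - apply covered_absorbs; [discriminate | eapply verdict_path_covered; eauto; discriminate].
  - apply covered_absorbs; [discriminate | eapply verdict_path_covered; eauto; discriminate].
  - destruct (classic (covered m vyes s /\ covered m vno s)) as [[Hy Hn]|Hnot].
    + eapply absorbs_trans; [| apply absorbs_inconsistent].
      apply absorbs_sum; apply covered_absorbs; auto; discriminate.
    + apply (absorbs_in (s, Var x)).
      apply not_and_or in Hnot. destruct Hnot as [Hnot|Hnot];
        eapply variable_path_kept; eauto; discriminate.
Qed.

End FreshAction.

Lemma fresh_of_injection (f : nat -> A) : (forall i j, f i = f j -> i = j) ->
  forall l : list A, exists c, ~ In c l.
Proof.
  intros Hf l. apply NNPP. intro H.
  assert (Hall : forall c, In c l) by (intro c; apply NNPP; intro Hc; apply H; eauto).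
  assert (Hle : length (map f (seq 0 (S (length l)))) <= length l).
  { apply NoDup_incl_length.
    - apply NoDup_map_NoDup_ForallPairs; [intros x y _ _; apply Hf | apply seq_NoDup].
    - intros c _. apply Hall. }
  rewrite length_map, length_seq in Hle. lia.
Qed.

End Completeness.

Theorem mainTheorem10 (Act : Type)
  (Hinf : exists f : nat -> Act, forall i j, f i = f j -> i = j) :
  forall m n : mon Act, omega_eq m n -> derivable (@Ev' Act) m n.
Proof.
  destruct Hinf as [f Hf]. pose proof (fresh_of_injection f Hf) as fresh.
  intros m n H.
  assert (Hmn : absorbs (nf (paths m)) (nf (paths n)))
    by (apply absorbs_nf, (path_absorbed fresh H)).
  assert (Hnm : absorbs (nf (paths n)) (nf (paths m)))
    by (apply absorbs_nf, (path_absorbed fresh (omega_eq_sym H))).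
  eapply d_trans; [apply nf_paths |].
  eapply d_trans; [apply (absorbs_antisym Hmn Hnm) | apply d_sym, nf_paths].
Qed.
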